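(* Let $\mathcal F$ be a normal TDD representing a tensor $\phi$. Applying a reduction rule (RR1, RR2, RR3 or RR4) to $\mathcal F$ does not change the tensor it represents. Moreover, the reduced TDD of $\phi$ can be obtained from $\mathcal F$ by applying the reduction rules until none is applicable.
   Context: Fix a finite index set $I$ with a linear order $\prec$. Indices take values in $\{0,1\}$; a tensor over $I$ is a map $\{0,1\}^I\to\mathbb{C}$ (tensors over subsets of $I$ are regarded as tensors over $I$ not depending on the other indices). Each index $x$ is regarded as the tensor $x(c)=c$, and $\overline{x}(c):=1-c$; operations on tensors are pointwise. A TDD over $I$ is $\mathcal F=(V,E,index,value,low,high,w)$: a rooted directed acyclic graph with finite node set $V$ partitioned into non-terminal nodes $V_N$ and terminal nodes $V_T$, root $r_{\mathcal F}$; $index:V_N\to I$; $value:V_T\to\mathbb{C}$; $low,high:V_N\to V$ (0- and 1-successors); edges are the low-edges $(v,low(v))$ and high-edges $(v,high(v))$, $v\in V_N$, plus a unique source-less incoming edge $e_r$ of the root; $w$ gives each edge a complex weight and $w_{\mathcal F}:=w(e_r)$. Node tensors: $\Phi(v)=value(v)$ for terminal $v$; otherwise $\Phi(v)=w_0\overline{x_v}\Phi(low(v))+w_1x_v\Phi(high(v))$ with $x_v=index(v)$ and $w_0,w_1$ the low-/high-edge weights. The TDD represents $\Phi(\mathcal F):=w_{\mathcal F}\Phi(r_{\mathcal F})$. Normality (w.r.t. $\prec$): the pivot of a tensor $\phi$ is the lexicographically smallest (compare at the $\prec$-smallest differing index, $0<1$) $\vec a$ with $|\phi(\vec a)|=\max_{\vec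 b}|\phi(\vec b)|$; $\phi$ is normal if $\phi=0$ or $\phi$ equals $1$ at its pivot. A TDD is normal if $\Phi(v)$ is normal for every node $v$. A TDD is reduced if it is normal and (1) $\Phi(v)\neq0$ for every node $v$; (2) all edges of weight $0$ point to the unique terminal node, which has value $1$; (3) $\Phi(u)\neq\Phi(v)$ for any two distinct nodes $u\neq v$. ''The reduced TDD of $\phi$'' means a reduced TDD $\mathcal G$ with $\Phi(\mathcal G)=\phi$ (such TDDs are unique up to isomorphism among $\prec$-ordered ones). Reduction rules. RR1: merge all terminal nodes with value $1$; delete all terminal nodes with value $0$ (if any), redirect their incoming edges to the (unique) terminal node and reset the weights of these edges to $0$. RR2: redirect all weight-$0$ edges to the terminal node; if these include the incoming edge of the root, the terminal node becomes the new root; delete all nodes (and edges involving them) not reachable from the root. RR3: delete a node $v$ if its 0- and 1-successors are identical and its low- and high-edges have the same weight $w$ (either $0$ or $1$), redirecting its incoming edges to the terminal node with value $1$ if $w=0$ and otherwise to its successor. RR4: merge two nodes if they have the same index, the same 0- and 1-successors, and the same weights on the corresponding edges. *)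

From mathcomp Require Import all_boot all_order all_algebra.
From mathcomp Require Import reals.
From mathcomp.real_closed Require Import complex.

Set Implicit Arguments.
Unset Strict Implicit.
Unset Printing Implicit Defensive.

Import Order.TTheory GRing.Theory Num.Theory.
Local Open Scope ring_scope.

Section TDD.
Variable R : realType.
Local Notation C := (R[i]).
Variables (disp : Order.disp_t) (I : finOrderType disp).

Definition assignment := {ffun I -> bool}.
Definition tensor := assignment -> C.

Definition xvar (x : I) : tensor := fun a => (a x)%:R.
Definition xbar (x : I) : tensor := fun a => 1 - (a x)%:R.

Definition lex_lt (a b : assignment) : Prop :=
  exists i, [/\ a i = false, b i = true & forall j, (j < i)%O -> a j = b j].
Definition lex_le (a b : assignment) : Prop := a = b \/ lex_lt a b.

Definition is_pivot (phi : tensor) (p : assignment) : Prop :=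
  (forall b, `|phi b| <= `|phi p|) /\
  (forall b, `|phi b| = `|phi p| -> lex_le p b).

Definition normal_tensor (phi : tensor) : Prop :=
  (forall a, phi a = 0) \/ (exists p, is_pivot phi p /\ phi p = 1).

(* A node is terminal (with its value) or non-terminal with
   index, 0-successor, low-edge weight, 1-successor, high-edge weight.     *)
Inductive node :=
  | Term of C
  | Inner of I & nat & C & nat & C.

(* nodes: the (finite) node set, given by identifiers;
   root / wroot: target and weight of the source-less root edge e_r;
   lab: the label of each node (junk outside [nodes]).                     *)
Record tdd := TDD {
  nodes : seq nat;
  root : nat;
  wroot : C;
  lab : nat -> node }.

Definition is_term (l : nat -> node) (v : nat) : bool :=
  if l v is Term _ then true else false.

Definition term_val (l : nat -> node) (v : nat) : C :=
  if l v is Term c then c else 0.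

(* The node tensor, computed by structural recursion with fuel; on an
   acyclic graph with [size nodes] nodes this fuel is sufficient.          *)
Fixpoint phi_n (l : nat -> node) (k : nat) (v : nat) : tensor :=
  match k with
  | 0 => fun _ => 0
  | k'.+1 =>
    match l v with
    | Term c => fun _ => c
    | Inner x lo w0 hi w1 =>
        fun a => w0 * xbar x a * phi_n l k' lo a + w1 * xvar x a * phi_n l k' hi a
    end
  end.

Definition node_tensor (F : tdd) (v : nat) : tensor :=
  phi_n (lab F) (size (nodes F)) v.

Definition tensor_of (F : tdd) : tensor :=
  fun a => wroot F * node_tensor F (root F) a.

Definition wf (F : tdd) : Prop :=
  [/\ uniq (nodes F), root F \in nodes F,
      (forall v x lo w0 hi w1, v \in nodes F -> lab F v = Inner x lo w0 hi w1 ->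
          lo \in nodes F /\ hi \in nodes F) &
      exists rk : nat -> nat, forall v x lo w0 hi w1, v \in nodes F ->
          lab F v = Inner x lo w0 hi w1 -> (rk lo < rk v)%N /\ (rk hi < rk v)%N].

Definition ordered (F : tdd) : Prop :=
  forall v x lo w0 hi w1, v \in nodes F -> lab F v = Inner x lo w0 hi w1 ->
    (forall y a b c e, lab F lo = Inner y a b c e -> (x < y)%O) /\
    (forall y a b c e, lab F hi = Inner y a b c e -> (x < y)%O).

Definition normal_tdd (F : tdd) : Prop :=
  forall v, v \in nodes F -> normal_tensor (node_tensor F v).

Definition edge (F : tdd) (u : nat) (w : C) : Prop :=
  (u = root F /\ w = wroot F) \/
  exists v x lo w0 hi w1, [/\ v \in nodes F, lab F v = Inner x lo w0 hi w1 &
                             (u = lo /\ w = w0) \/ (u = hi /\ w = w1)].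

Definition terms (F : tdd) : seq nat := [seq v <- nodes F | is_term (lab F) v].

Definition reduced (F : tdd) : Prop :=
  [/\ normal_tdd F,
      (forall v, v \in nodes F -> node_tensor F v <> (fun _ => 0)),
      (exists t, [/\ terms F = [:: t], lab F t = Term 1 &
                             forall u w, edge F u w -> w = 0 -> u = t]) &
      (forall u v, u \in nodes F -> v \in nodes F -> u <> v ->
                   node_tensor F u <> node_tensor F v)].

Definition map_edges (f : nat -> C -> nat * C) (F : tdd) (ns : seq nat) : tdd :=
  TDD ns (f (root F) (wroot F)).1 (f (root F) (wroot F)).2
    (fun v => match lab F v with
              | Term c => Term c
              | Inner x lo w0 hi w1 =>
                  Inner x (f lo w0).1 (f lo w0).2 (f hi w1).1 (f hi w1).2
              end).

Definition set_lab (F : tdd) (t : nat) (n : node) : tdd :=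
  TDD (nodes F) (root F) (wroot F) (fun v => if v == t then n else lab F v).

(* RR1: merge terminals with value 1, delete terminals with value 0 and
   redirect their incoming edges (weight reset to 0) to the unique terminal
   with value 1 (the first value-1 terminal if any; otherwise a value-0
   terminal is kept and relabelled 1). Applicable iff something changes.   *)
Definition RR1 (F : tdd) (G : tdd) : Prop :=
  let T0 := [seq v <- terms F | term_val (lab F) v == 0] in
  let T1 := [seq v <- terms F | term_val (lab F) v == 1] in
  let t := head (head 0%N T0) T1 in
  (T0 != [::] \/ (1 < size T1)%N) /\
  G = set_lab
        (map_edges (fun u w => if u \in T0 then (t, 0)
                               else if u \in T1 then (t, w) else (u, w))
           F [seq v <- nodes F | (v == t) || (v \notin T0 ++ T1)])
        t (Term 1).

Fixpoint reach_from (l : nat -> node) (k : nat) (v : nat) : seq nat :=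
  v :: match k with
       | 0 => [::]
       | k'.+1 => if l v is Inner _ lo _ hi _
                  then reach_from l k' lo ++ reach_from l k' hi else [::]
       end.

Definition reachable (F : tdd) (v : nat) : bool :=
  v \in reach_from (lab F) (size (nodes F)) (root F).

(* RR2: redirect all weight-0 edges to the (unique) terminal node (this
   includes the root edge), then delete all nodes not reachable from the
   root. Applicable iff something changes. *)
Definition RR2 (F : tdd) (G : tdd) : Prop :=
  exists t, [/\ terms F = [:: t],
    (exists u, edge F u 0 /\ u <> t) \/ (exists v, v \in nodes F /\ ~~ reachable F v) &
    let G' := map_edges (fun u w => if w == 0 then (t, 0) else (u, w)) F (nodes F) in
    G = TDD [seq v <- nodes F | reachable G' v] (root G') (wroot G') (lab G')].

Definition RR3 (F : tdd) (G : tdd) : Prop :=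
  exists v x s w, [/\ v \in nodes F, lab F v = Inner x s w s w &
    (w = 1 /\
       G = map_edges (fun u w' => if u == v then (s, w') else (u, w'))
             F [seq u <- nodes F | u != v]) \/
    (w = 0 /\ exists t, [/\ terms F = [:: t], lab F t = Term 1 &
       G = map_edges (fun u w' => if u == v then (t, 0) else (u, w'))
             F [seq u <- nodes F | u != v]])].

Definition RR4 (F : tdd) (G : tdd) : Prop :=
  exists u v, [/\ u \in nodes F, v \in nodes F, u != v,
    (exists x lo w0 hi w1, lab F u = Inner x lo w0 hi w1 /\ lab F v = Inner x lo w0 hi w1) &
    G = map_edges (fun z w => if z == v then (u, w) else (z, w))
          F [seq z <- nodes F | z != v]].

Definition step (F G : tdd) : Prop := [\/ RR1 F G, RR2 F G, RR3 F G | RR4 F G].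

Inductive steps : tdd -> tdd -> Prop :=
  | steps_refl F : steps F F
  | steps_cons F G H : step F G -> steps G H -> steps F H.

Definition irreducible (F : tdd) : Prop := ~ exists G, step F G.

End TDD.

From Pilot Require Import Defs.
From mathcomp Require Import all_boot all_order all_algebra.
From mathcomp Require Import reals.
From mathcomp.real_closed Require Import complex.
From mathcomp Require Import boolp.
From mathcomp Require Import zify ring.

(* Every reduction rule redirects each edge (u, w) to an edge (u', w') carrying
   the same weighted tensor, w' Phi(u') = w Phi(u), keeps a subset of the nodes
   and relabels only terminals, which become the normal constant 1; hence
   acyclicity, ordering, normality, the node tensors and the represented tensor
   are preserved.  No rule adds nodes and RR3, RR4 delete one; when RR1 or RR2
   delete nothing, they remove all terminals of value 0, resp. all weight-0
   edges into non-terminal nodes, so the rules terminate.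
   In an irreducible normal TDD, condition (2) is the non-applicability of RR1
   and RR2, and a zero node would have two weight-0 edges into the terminal, so
   RR3 would apply.  Distinct nodes have distinct tensors, by induction on rank:
   a normal nonzero tensor phi determines w in w phi, so two nodes with equal
   tensors and equal indices have the same successors and weights (and RR4
   applies), while if the index x of one of them is missing in the other, its
   tensor does not depend on x and RR3 applies to it. *)

Set Implicit Arguments.
Unset Strict Implicit.
Unset Printing Implicit Defensive.
Import Order.TTheory GRing.Theory Num.Theory.
Local Open Scope ring_scope.

Lemma count_lt_sub (T : eqType) (p q : pred T) (s : seq T) x :
  subpred p q -> x \in s -> q x -> ~~ p x -> (count p s < count q s)%N.
Proof.
move=> pq + qx npx; elim: s => //= y s IH; rewrite inE => /orP[/eqP <-|xs].
  by rewrite qx (negbTE npx) add0n add1n ltnS sub_count.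
by rewrite -addnS leq_add ?IH //; case/boolP: (p y) => // /pq ->.
Qed.

Section TDDReduction.
Variable R : realType.
Local Notation C := R[i].
Variables (disp : Order.disp_t) (I : finOrderType disp).
Local Notation tdd := (tdd R I).
Local Notation node := (node R I).
Local Notation tensor := (tensor R I).
Local Notation assignment := (assignment I).
Implicit Types (F G : tdd) (l : nat -> node) (N : seq nat) (rk : nat -> nat).

(** * Normal tensors *)

Lemma lex_le_anti (p q : assignment) : lex_le p q -> lex_le q p -> p = q.
Proof.
case=> [//|[i [pi qi lt_i]]] [//|[j [qj pj lt_j]]].
case: (ltgtP i j) => [ij|ji|eij]; first by move: (lt_j _ ij); rewrite pi qi.
  by move: (lt_i _ ji); rewrite pj qj.
by move: pi; rewrite eij pj.
Qed.

Definition zero_assignment : assignment := [ffun _ => false].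

Lemma lex_le_zero (b : assignment) : lex_le zero_assignment b.
Proof.
have [->|nb] := eqVneq zero_assignment b; [by left | right].
have [i bi] : exists i, b i.
  apply/existsP; apply: contraR nb => /existsPn b0.
  by apply/eqP/ffunP => j; rewrite ffunE; move: (b0 j); case: (b j).
have [j bj j_min] := arg_minP id bi.
exists j; split=> //; first by rewrite ffunE.
move=> k kj; rewrite ffunE; case bk: (b k) => //.
by move: (j_min k bk); rewrite leNgt kj.
Qed.

Lemma normal_tensor1 : normal_tensor (fun _ : assignment => 1 : C).
Proof. by right; exists zero_assignment; split=> //; split=> // b _; apply: lex_le_zero. Qed.

Lemma normal_tensor_const (c : C) :
  normal_tensor (fun _ : assignment => c) -> c = 0 \/ c = 1.
Proof. by case=> [/(_ zero_assignment)|[p [_ ->]]]; [left|right]. Qed.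

Lemma normal_tensor_scale_inj (phi psi : tensor) (c d : C) :
  normal_tensor phi -> normal_tensor psi -> (exists b, phi b != 0) -> c != 0 ->
  (forall b, c * phi b = d * psi b) -> c = d /\ phi =1 psi.
Proof.
move=> nphi npsi [b phib] c0 e.
have dpsib : d * psi b != 0 by rewrite -e mulf_neq0.
have d0 : d != 0 by apply: contraNneq dpsib => ->; rewrite mul0r.
have psib : psi b != 0 by apply: contraNneq dpsib => ->; rewrite mulr0.
case: nphi => [phi0|[p [[pmax pmin] p1]]]; first by rewrite phi0 eqxx in phib.
case: npsi => [psi0|[q [[qmax qmin] q1]]]; first by rewrite psi0 eqxx in psib.
have en b' : `|c| * `|phi b'| = `|d| * `|psi b'| by rewrite -!normrM e.
have nc : 0 < `|c| by rewrite normr_gt0.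
have nd : 0 < `|d| by rewrite normr_gt0.
have psi_pq : `|psi p| = `|psi q|.
  by apply/le_anti; rewrite qmax /= -(ler_pM2l nd) -!en ler_pM2l.
have phi_qp : `|phi q| = `|phi p|.
  by apply: (mulfI (lt0r_neq0 nc)); rewrite !en psi_pq.
have epq : p = q by apply: lex_le_anti; [apply: pmin | apply: qmin].
subst q; have cd : c = d by move: (e p); rewrite p1 q1 !mulr1.
by split=> // b'; apply: (mulfI c0); rewrite e cd.
Qed.

Definition indep (phi : tensor) (x : I) :=
  forall a b : assignment, (forall j, j != x -> a j = b j) -> phi a = phi b.

Definition upd (b : assignment) (x : I) (c : bool) : assignment :=
  [ffun j => if j == x then c else b j].

Lemma upd_other b x c j : j != x -> upd b x c j = b j.
Proof. by move=> jx; rewrite ffunE (negbTE jx). Qed.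

(** * Rankings and node tensors *)

Definition succ_closed N l := forall v x lo w0 hi w1,
  v \in N -> l v = Inner x lo w0 hi w1 -> lo \in N /\ hi \in N.

Definition ranking N l rk := forall v x lo w0 hi w1,
  v \in N -> l v = Inner x lo w0 hi w1 -> (rk lo < rk v)%N /\ (rk hi < rk v)%N.

Definition dag N l := succ_closed N l /\ exists rk, ranking N l rk.

Lemma wfP F :
  wf F <-> [/\ uniq (nodes F), Defs.root F \in nodes F & dag (nodes F) (lab F)].
Proof. by split=> [[? ? ? ?] | [? ? [? ?]]]; split. Qed.

Lemma wf_dag F : wf F -> dag (nodes F) (lab F).
Proof. by case/wfP. Qed.

Lemma wf_closed F : wf F -> succ_closed (nodes F) (lab F).
Proof. by case. Qed.

Lemma wf_root F : wf F -> Defs.root F \in nodes F.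
Proof. by case. Qed.

(* Counting the nodes of smaller rank gives a ranking bounded by [size N], the
   fuel used by [node_tensor] and [reachable]. *)
Definition compress_rank N rk v := count (fun u => rk u < rk v)%N N.

Lemma compress_rank_lt_size N rk v : v \in N -> (compress_rank N rk v < size N)%N.
Proof. by move=> vN; rewrite -count_predT; apply: (count_lt_sub _ vN) => //=; rewrite ltnn. Qed.

Lemma ranking_compress N l rk :
  succ_closed N l -> ranking N l rk -> ranking N l (compress_rank N rk).
Proof.
move=> cl rkl v x lo w0 hi w1 vN e.
have [loN hiN] := cl _ _ _ _ _ _ vN e; have [lo_v hi_v] := rkl _ _ _ _ _ _ vN e.
have mono u : u \in N -> (rk u < rk v)%N -> (compress_rank N rk u < compress_rank N rk v)%N.
  move=> uN uv; apply: (count_lt_sub _ uN) => //=; last by rewrite ltnn.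
  by move=> z /= zu; apply: ltn_trans zu uv.
by split; apply: mono.
Qed.

Definition term_rank l rk z := if is_term l z then 0%N else (rk z).+1.

Lemma ranking_term_rank N l rk : ranking N l rk -> ranking N l (term_rank l rk).
Proof.
move=> rkl v x lo w0 hi w1 vN e; have [lo_v hi_v] := rkl _ _ _ _ _ _ vN e.
have -> : term_rank l rk v = (rk v).+1 by rewrite /term_rank /is_term e.
by rewrite /term_rank; split; case: is_term.
Qed.

Lemma ranking_lower N l rk s v : ranking N l rk ->
  (forall x lo w0 hi w1, l s = Inner x lo w0 hi w1 -> (rk lo < rk v)%N /\ (rk hi < rk v)%N) ->
  ranking N l (fun z => if z == s then minn (rk s) (rk v) else rk z).
Proof.
move=> rkl below p x lo w0 hi w1 pN e; have [lo_p hi_p] := rkl _ _ _ _ _ _ pN e.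
have lower c : (rk c < rk p)%N -> (p = s -> (rk c < rk v)%N) ->
    ((if c == s then minn (rk s) (rk v) else rk c) <
     (if p == s then minn (rk s) (rk v) else rk p))%N.
  by move=> cp cv; case: (eqVneq c s) => [cs|_]; case: (eqVneq p s) => [ps|_];
    rewrite ?cs ?ps in cp cv *; lia.
by split; apply: lower => // ps; case: (below x lo w0 hi w1); rewrite -?ps.
Qed.

Lemma dag_ind N l (P : nat -> Prop) : dag N l ->
  (forall v, v \in N ->
     (forall x lo w0 hi w1, l v = Inner x lo w0 hi w1 -> P lo /\ P hi) -> P v) ->
  {in N, forall v, P v}.
Proof.
case=> cl [rk rkl] IH v; have [n] := ubnP (rk v); elim: n v => // n IHn v /ltnSE vn vN.
apply: IH => // x lo w0 hi w1 e.
have [loN hiN] := cl _ _ _ _ _ _ vN e; have [lo_v hi_v] := rkl _ _ _ _ _ _ vN e.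
by split; apply: IHn => //; apply: leq_trans vn.
Qed.

Definition node_rhs l (P : nat -> tensor) v : tensor :=
  match l v with
  | Term c => fun _ => c
  | Inner x lo w0 hi w1 =>
      fun a => w0 * xbar R x a * P lo a + w1 * xvar R x a * P hi a
  end.

Lemma phi_n_fuel N l rk : succ_closed N l -> ranking N l rk ->
  forall k k' v, v \in N -> (rk v < k)%N -> (rk v < k')%N -> phi_n l k v = phi_n l k' v.
Proof.
move=> cl rkl; elim=> [|k IH] [|k'] v vN //= vk vk'.
case e: (l v) => [//|x lo w0 hi w1].
have [loN hiN] := cl _ _ _ _ _ _ vN e; have [lo_v hi_v] := rkl _ _ _ _ _ _ vN e.
by rewrite (IH k' lo) ?(IH k' hi) //; lia.
Qed.

Lemma node_tensorE F : wf F ->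
  {in nodes F, forall v, node_tensor F v = node_rhs (lab F) (node_tensor F) v}.
Proof.
move=> /wf_dag[cl [rk /(ranking_compress cl) rkl]] v vN.
have := compress_rank_lt_size rk vN; rewrite /node_tensor /node_rhs.
case: (size (nodes F)) => [|n] //= vn; case e: (lab F v) => [//|x lo w0 hi w1].
have [loN hiN] := cl _ _ _ _ _ _ vN e; have [lo_v hi_v] := rkl _ _ _ _ _ _ vN e.
by rewrite (phi_n_fuel cl rkl (k := n) (k' := n.+1) loN)
  ?(phi_n_fuel cl rkl (k := n) (k' := n.+1) hiN) //; lia.
Qed.

Lemma node_tensor_unique F (P : nat -> tensor) : wf F ->
  {in nodes F, forall v, P v = node_rhs (lab F) P v} ->
  {in nodes F, forall v, node_tensor F v = P v}.
Proof.
move=> wfF hP; apply: (dag_ind (wf_dag wfF)) => v vN IH.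
rewrite node_tensorE // hP // /node_rhs.
case e: (lab F v) => [//|x lo w0 hi w1].
by have [-> ->] := IH _ _ _ _ _ e.
Qed.

Lemma node_tensor_term F v c :
  wf F -> v \in nodes F -> lab F v = Term I c -> node_tensor F v = fun _ => c.
Proof. by move=> wfF vN e; rewrite node_tensorE // /node_rhs e. Qed.

Lemma exists_term F : wf F -> exists t, t \in terms F.
Proof.
move=> wfF; suff: {in nodes F, forall v, exists t, t \in terms F} by apply; apply: wf_root.
apply: (dag_ind (wf_dag wfF)) => v vN IH; case e: (lab F v) => [c|x lo w0 hi w1].
  by exists v; rewrite mem_filter /is_term e vN.
by have [[t ?] _] := IH _ _ _ _ _ e; exists t.
Qed.

Definition index_gt l (x : I) z : bool :=
  if l z is Inner y _ _ _ _ then (x < y)%O else true.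

Lemma index_gt_trans l x y z : (x < y)%O -> index_gt l y z -> index_gt l x z.
Proof. by rewrite /index_gt; case: (l z) => // y' _ _ _ _; apply: lt_trans. Qed.

Lemma orderedP F : ordered F <-> forall v x lo w0 hi w1,
  v \in nodes F -> lab F v = Inner x lo w0 hi w1 ->
  index_gt (lab F) x lo /\ index_gt (lab F) x hi.
Proof.
split=> ord v x lo w0 hi w1 vN e; have [lo_gt hi_gt] := ord _ _ _ _ _ _ vN e.
  by rewrite /index_gt; split;
    [case e': (lab F lo) => // *; apply: lo_gt e' | case e': (lab F hi) => // *; apply: hi_gt e'].
by split=> y ? ? ? ? e'; [move: lo_gt | move: hi_gt]; rewrite /index_gt e'.
Qed.

Section Ordered.
Variable F : tdd.
Hypotheses (wfF : wf F) (ordF : ordered F).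

Lemma node_tensor_indep :
  {in nodes F, forall v x, index_gt (lab F) x v -> indep (node_tensor F v) x}.
Proof.
apply: (dag_ind (wf_dag wfF)) => v vN IH x + a b ab.
rewrite node_tensorE // /node_rhs /index_gt.
case e: (lab F v) => [//|y lo w0 hi w1] xy.
have [lo_gt hi_gt] := (orderedP F).1 ordF _ _ _ _ _ _ vN e.
have [IHlo IHhi] := IH _ _ _ _ _ e.
have ey : a y = b y by apply: ab; rewrite eq_sym (lt_eqF xy).
by rewrite /xbar /xvar ey (IHlo x _ a b ab) ?(IHhi x _ a b ab) //;
  apply: index_gt_trans xy _.
Qed.

Lemma node_tensor_upd v x lo w0 hi w1 b :
  v \in nodes F -> lab F v = Inner x lo w0 hi w1 ->
  node_tensor F v (upd b x false) = w0 * node_tensor F lo b /\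
  node_tensor F v (upd b x true) = w1 * node_tensor F hi b.
Proof.
move=> vN e; have [loN hiN] := wf_closed wfF vN e.
have [lo_gt hi_gt] := (orderedP F).1 ordF _ _ _ _ _ _ vN e.
rewrite (node_tensorE wfF vN) /node_rhs e /xbar /xvar !ffunE eqxx /=.
rewrite !(node_tensor_indep loN lo_gt (@upd_other b x _)).
rewrite !(node_tensor_indep hiN hi_gt (@upd_other b x _)).
by split; ring.
Qed.

End Ordered.

(** * Edges and reachability *)

Lemma edge_succ F v x lo w0 hi w1 : v \in nodes F -> lab F v = Inner x lo w0 hi w1 ->
  edge F lo w0 /\ edge F hi w1.
Proof. by move=> vN e; split; right; exists v, x, lo, w0, hi, w1; split=> //; [left|right]. Qed.

Lemma edge_in F u w : wf F -> edge F u w -> u \in nodes F.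
Proof.
move=> wfF [[-> _]|[v [x [lo [w0 [hi [w1 [vN e uw]]]]]]]]; first exact: wf_root.
by have [loN hiN] := wf_closed wfF vN e; case: uw => -[-> _].
Qed.

Lemma mem_reach_from l k v : v \in reach_from l k v.
Proof. by case: k => [|k] /=; rewrite mem_head. Qed.

Lemma reach_from_succ N l rk : succ_closed N l -> ranking N l rk ->
  forall k v, v \in N -> (rk v <= k)%N -> forall z x lo w0 hi w1,
  z \in reach_from l k v -> l z = Inner x lo w0 hi w1 ->
  lo \in reach_from l k v /\ hi \in reach_from l k v.
Proof.
move=> cl rkl; elim=> [|k IH] v vN vk z x lo w0 hi w1 /=.
  by rewrite inE => /eqP -> e; have [lo_v _] := rkl _ _ _ _ _ _ vN e; lia.
rewrite inE => /orP[/eqP -> e|]; first by rewrite e !inE !mem_cat !mem_reach_from !orbT.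
case e: (l v) => [//|y lo' w0' hi' w1'].
have [loN hiN] := cl _ _ _ _ _ _ vN e; have [lo_v hi_v] := rkl _ _ _ _ _ _ vN e.
rewrite !inE !mem_cat => /orP[] zr ez.
  by have [-> ->] := IH lo' loN ltac:(lia) _ _ _ _ _ _ zr ez; rewrite !orbT.
by have [-> ->] := IH hi' hiN ltac:(lia) _ _ _ _ _ _ zr ez; rewrite !orbT.
Qed.

Lemma reachable_succ F z x lo w0 hi w1 : wf F -> reachable F z ->
  lab F z = Inner x lo w0 hi w1 -> reachable F lo /\ reachable F hi.
Proof.
move=> /wfP[_ rN [cl [rk /(ranking_compress cl) rkl]]].
by apply: (reach_from_succ cl rkl rN); apply/ltnW/compress_rank_lt_size.
Qed.

Lemma reach_from_eq N l l' : succ_closed N l -> {in N, l =1 l'} ->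
  forall k v, v \in N -> reach_from l k v = reach_from l' k v.
Proof.
move=> cl ll'; elim=> [|k IH] v vN //=.
rewrite -ll' //; case e: (l v) => [//|x lo w0 hi w1].
by have [loN hiN] := cl _ _ _ _ _ _ vN e; rewrite !IH.
Qed.

(** * Redirecting edges *)

Definition relabel (f : nat -> C -> nat * C) (h : nat -> C -> C) l v : node :=
  match l v with
  | Term c => Term I (h v c)
  | Inner x lo w0 hi w1 => Inner x (f lo w0).1 (f lo w0).2 (f hi w1).1 (f hi w1).2
  end.

Lemma index_gt_relabel f h l x z : index_gt (relabel f h l) x z = index_gt l x z.
Proof. by rewrite /index_gt /relabel; case: (l z). Qed.

Lemma is_term_relabel f h l z : is_term (relabel f h l) z = is_term l z.
Proof. by rewrite /is_term /relabel; case: (l z). Qed.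

Definition relabel_tensor F (h : nat -> C -> C) v : tensor :=
  if lab F v is Term c then fun _ => h v c else node_tensor F v.

Lemma relabel_tensorE F h v : wf F -> v \in nodes F ->
  (forall c, lab F v = Term I c -> h v c = c) -> relabel_tensor F h v = node_tensor F v.
Proof.
move=> wfF vN hv; rewrite /relabel_tensor; case e: (lab F v) => [c|//].
by rewrite hv // (node_tensor_term wfF vN e).
Qed.

Definition val_terms F c := [seq v <- terms F | term_val (lab F) v == c].

Lemma val_termsP F c v :
  reflect (v \in nodes F /\ lab F v = Term I c) (v \in val_terms F c).
Proof.
rewrite !mem_filter /term_val /is_term.
case: (lab F v) => [c'|*]; last by rewrite /= andbF; constructor; case.
by apply: (iffP andP) => [[/eqP-> /andP[_ ?]] | [? [->]]]; rewrite ?eqxx.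
Qed.

(* The common shape of the four rules: each edge [(u, w)] becomes [f u w], a
   subsequence of the nodes is kept, and a terminal [v] of value [c] gets the
   value [h v c]. *)
Record redirection F G (f : nat -> C -> nat * C) (h : nat -> C -> C) : Prop :=
  Redirection {
    redirect_subseq : subseq (nodes G) (nodes F);
    redirect_root : Defs.root G = (f (Defs.root F) (wroot F)).1;
    redirect_wroot : wroot G = (f (Defs.root F) (wroot F)).2;
    redirect_lab : lab G =1 relabel f h (lab F);
    redirect_root_in : Defs.root G \in nodes G;
    redirect_succ : forall v x lo w0 hi w1, v \in nodes G ->
      lab F v = Inner x lo w0 hi w1 -> (f lo w0).1 \in nodes G /\ (f hi w1).1 \in nodes G;
    redirect_rank : exists2 rk, ranking (nodes F) (lab F) rk &
      forall u w, (rk (f u w).1 <= rk u)%N;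
    redirect_index : forall x u w, index_gt (lab F) x u -> index_gt (lab F) x (f u w).1;
    redirect_weight : forall u w a, u \in nodes F ->
      (f u w).2 * relabel_tensor F h (f u w).1 a = w * node_tensor F u a;
    redirect_term : forall v c, h v c = c \/ h v c = 1 }.

Section Redirection.
Variables (F G : tdd) (f : nat -> C -> nat * C) (h : nat -> C -> C).
Hypotheses (wfF : wf F) (rd : redirection F G f h).

Lemma redirection_sub : {subset nodes G <= nodes F}.
Proof. exact: mem_subseq (redirect_subseq rd). Qed.

Lemma redirection_labE : lab G = relabel f h (lab F).
Proof. exact: funext (redirect_lab rd). Qed.

Lemma redirection_size : (size (nodes G) <= size (nodes F))%N.
Proof. exact: size_subseq (redirect_subseq rd). Qed.

Lemma redirection_wf : wf G.
Proof.
have [rk rkF mono] := redirect_rank rd.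
apply/wfP; split; [|exact: redirect_root_in rd|split].
- by apply: subseq_uniq (redirect_subseq rd) _; case: wfF.
- move=> v x lo w0 hi w1 vG; rewrite (redirect_lab rd) /relabel.
  case e: (lab F v) => [//|y lo' w0' hi' w1'] [_ <- _ <- _].
  exact: (redirect_succ rd) e.
exists rk => v x lo w0 hi w1 vG; rewrite (redirect_lab rd) /relabel.
case e: (lab F v) => [//|y lo' w0' hi' w1'] [_ <- _ <- _].
have [lo_v hi_v] := rkF _ _ _ _ _ _ (redirection_sub vG) e.
by split; apply: leq_ltn_trans (mono _ _) _.
Qed.

Lemma redirection_ordered : ordered F -> ordered G.
Proof.
move=> /orderedP ordF; apply/orderedP => v x lo w0 hi w1 vN.
rewrite redirection_labE !index_gt_relabel /relabel.
case e: (lab F v) => [//|y lo' w0' hi' w1'] [<- <- _ <- _].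
have [lo_gt hi_gt] := ordF _ _ _ _ _ _ (redirection_sub vN) e.
by split; apply: (redirect_index rd).
Qed.

Lemma redirection_node_tensor :
  {in nodes G, forall v, node_tensor G v = relabel_tensor F h v}.
Proof.
apply: node_tensor_unique redirection_wf _ => v vN.
have vF := redirection_sub vN.
rewrite /node_rhs redirection_labE /relabel.
case e: (lab F v) => [c|x lo w0 hi w1]; first by rewrite /relabel_tensor e.
have [loN hiN] := wf_closed wfF vF e.
have -> : relabel_tensor F h v = node_tensor F v by rewrite /relabel_tensor e.
apply: funext => a; rewrite (node_tensorE wfF vF) /node_rhs e.
rewrite -[(f lo w0).2 * _ * _]mulrA [(f lo w0).2 * _]mulrCA (redirect_weight rd _ _ loN).
rewrite -[(f hi w1).2 * _ * _]mulrA [(f hi w1).2 * _]mulrCA (redirect_weight rd _ _ hiN).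
ring.
Qed.

Lemma redirection_tensor_of : tensor_of G = tensor_of F.
Proof.
apply: funext => a; rewrite /tensor_of redirection_node_tensor ?(redirect_root_in rd) //.
by rewrite (redirect_root rd) (redirect_wroot rd) (redirect_weight rd) ?wf_root.
Qed.

Lemma redirection_normal : normal_tdd F -> normal_tdd G.
Proof.
move=> nF v vN; rewrite redirection_node_tensor // /relabel_tensor.
have vF := redirection_sub vN.
case e: (lab F v) => [c|]; last exact: nF.
have [->|->] := redirect_term rd v c; last exact: normal_tensor1.
by rewrite -(node_tensor_term wfF vF e); apply: nF.
Qed.

Lemma redirection_zero_terms : {subset val_terms G 0 <= val_terms F 0}.
Proof.
move=> v /val_termsP[vG]; rewrite (redirect_lab rd) /relabel.
case e: (lab F v) => [c|//] [hc]; apply/val_termsP; split; first exact: redirection_sub.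
rewrite e; congr Term.
by case: (redirect_term rd v c) hc => -> // /eqP; rewrite oner_eq0.
Qed.

Lemma redirection_edge u w : edge G u w -> exists c w', edge F c w' /\ f c w' = (u, w).
Proof.
case=> [[-> ->]|[v [x [lo [w0 [hi [w1 [vN eG uw]]]]]]]].
  exists (Defs.root F), (wroot F); split; first by left.
  by rewrite (redirect_root rd) (redirect_wroot rd); case: (f _ _).
move: eG uw; rewrite (redirect_lab rd) /relabel.
case e: (lab F v) => [//|y lo' w0' hi' w1'] [_ <- <- <- <-].
have vF := redirection_sub vN.
have [lo_edge hi_edge] := edge_succ vF e.
by case=> -[-> ->]; [exists lo', w0' | exists hi', w1']; split=> //; case: (f _ _).
Qed.

End Redirection.

Definition prune G := TDD [seq v <- nodes G | reachable G v] (Defs.root G) (wroot G) (lab G).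

Lemma redirection_prune F G f h : wf F -> redirection F G f h -> redirection F (prune G) f h.
Proof.
move=> wfF rd; have wfG := redirection_wf wfF rd.
case: rd => sub rootG wrootG labG rootG_in succ rank idx weight term; split=> //=.
- exact: subseq_trans (filter_subseq _ _) sub.
- by rewrite mem_filter /reachable mem_reach_from wf_root.
move=> v x lo w0 hi w1; rewrite mem_filter => /andP[vr vG] e.
have [loG hiG] := succ _ _ _ _ _ _ vG e.
have eG : lab G v = Inner x (f lo w0).1 (f lo w0).2 (f hi w1).1 (f hi w1).2.
  by rewrite labG /relabel e.
by have [lor hir] := reachable_succ wfG vr eG; rewrite !mem_filter lor hir loG hiG.
Qed.

(** * The reduction rules *)

Definition merge_edge (v s : nat) (k : C -> C) (u : nat) (w : C) : nat * C :=
  if u == v then (s, k w) else (u, w).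

Definition merge F v s k := map_edges (merge_edge v s k) F [seq u <- nodes F | u != v].

(* RR3 and RR4 delete [v] after redirecting its incoming edges to [s],
   rescaling their weights by [k]. *)
Definition mergeable F v s (k : C -> C) := [/\ v \in nodes F, s \in [seq u <- nodes F | u != v],
  (forall w a, k w * node_tensor F s a = w * node_tensor F v a),
  (forall rk, ranking (nodes F) (lab F) rk -> forall x lo w0 hi w1,
     lab F s = Inner x lo w0 hi w1 -> (rk lo < rk v)%N /\ (rk hi < rk v)%N) &
  (forall x, index_gt (lab F) x v -> index_gt (lab F) x s)].

Lemma merge_redirection F v s k : wf F -> mergeable F v s k ->
  redirection F (merge F v s k) (merge_edge v s k) (fun _ c => c).
Proof.
move=> wfF [vN sG weight below idx].
have target u w : u \in nodes F -> (merge_edge v s k u w).1 \in [seq u <- nodes F | u != v].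
  by move=> uN; rewrite /merge_edge; case: eqVneq => [//|uv]; rewrite mem_filter uv.
have /andP[sv sN] : (s != v) && (s \in nodes F) by rewrite -(mem_filter (predC1 v)).
have [_ [rk rkF]] := wf_dag wfF.
split=> //=.
- exact: filter_subseq.
- exact/target/wf_root.
- move=> u x lo w0 hi w1; rewrite mem_filter => /andP[_ uN] e.
  by have [loN hiN] := wf_closed wfF uN e; split; apply: target.
- exists (fun z => if z == s then minn (rk s) (rk v) else rk z).
    exact: ranking_lower (below _ rkF).
  move=> u w; rewrite /merge_edge; case: (eqVneq u v) => [->|_] //=.
  by rewrite eqxx eq_sym (negbTE sv) geq_minr.
- by move=> x u w; rewrite /merge_edge; case: (eqVneq u v) => [->|_] //; apply: idx.
- move=> u w a uN; rewrite /merge_edge; case: (eqVneq u v) => [->|_] /=;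
    by rewrite relabel_tensorE.
- by left.
Qed.

Lemma merge_size F v s k :
  v \in nodes F -> (size (nodes (merge F v s k)) < size (nodes F))%N.
Proof.
by move=> vN; rewrite /= size_filter -count_predT; apply: (count_lt_sub _ vN) => //=; rewrite eqxx.
Qed.

Lemma RR3_merge F G : wf F -> ordered F -> RR3 F G ->
  exists v s k, mergeable F v s k /\ G = merge F v s k.
Proof.
move=> wfF ordF [v [x [s [w [vN e rule]]]]].
have [sN _] := wf_closed wfF vN e.
have [lo_gt _] := (orderedP F).1 ordF _ _ _ _ _ _ vN e.
have tensor_v a : node_tensor F v a = w * node_tensor F s a.
  by rewrite (node_tensorE wfF vN) /node_rhs e /xbar /xvar; ring.
case: rule => [[w1 ->]|[w0 [t [terms_t t1 ->]]]].
  have s_v rk : ranking (nodes F) (lab F) rk -> (rk s < rk v)%N.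
    by move=> rkl; case: (rkl _ _ _ _ _ _ vN e).
  exists v, s, id; split=> //; split=> //.
  - rewrite mem_filter sN andbT; apply/eqP => sv.
    by have [_ [rk /s_v]] := wf_dag wfF; rewrite sv ltnn.
  - by move=> w' a; rewrite tensor_v w1 mul1r.
  - move=> rk rkl y lo w0 hi w1' es; have := s_v rk rkl.
    by have := rkl _ _ _ _ _ _ sN es; lia.
  - by move=> y; rewrite {1}/index_gt e => yx; apply: index_gt_trans yx lo_gt.
have : t \in terms F by rewrite terms_t mem_head.
rewrite mem_filter => /andP[_ tN].
exists v, t, (fun _ => 0); split=> //; split=> //.
- by rewrite mem_filter tN andbT; apply/eqP => tv; rewrite tv e in t1.
- by move=> w' a; rewrite tensor_v w0 !mul0r mulr0.
- by move=> rk _ y lo w0' hi w1; rewrite t1.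
- by move=> y; rewrite /index_gt t1.
Qed.

Lemma RR4_merge F G : wf F -> RR4 F G ->
  exists v s k, mergeable F v s k /\ G = merge F v s k.
Proof.
move=> wfF [u [v [uN vN uv [x [lo [w0 [hi [w1 [eu ev]]]]]] ->]]].
exists v, u, id; split=> //; split=> //.
- by rewrite mem_filter uv.
- by move=> w a; rewrite (node_tensorE wfF uN) (node_tensorE wfF vN) /node_rhs eu ev.
- by move=> rk rkl y lo' w0' hi' w1'; rewrite eu => -[_ <- _ <- _]; apply: rkl vN ev.
- by move=> y; rewrite /index_gt eu ev.
Qed.

Definition zero_inner_edge F := exists u, edge F u 0 /\ ~~ is_term (lab F) u.

(* Neither RR1 nor RR2 adds nodes; if they delete none, RR1 removes every
   terminal of value 0 and RR2 every weight-0 edge into a non-terminal node,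
   so the potential drops. *)
Definition potential F : nat := addn (val_terms F 0 != [::]).*2 `[< zero_inner_edge F >].

Definition measure F : nat := (4 * size (nodes F) + potential F)%N.

Lemma potential_le3 F : (potential F <= 3)%N.
Proof. by rewrite /potential; case: (_ != _); case: `[< _ >]. Qed.

Lemma measure_lt_size F G :
  (size (nodes G) < size (nodes F))%N -> (measure G < measure F)%N.
Proof. by have := potential_le3 G; rewrite /measure; lia. Qed.

Definition rr1_target F := head (head 0%N (val_terms F 0)) (val_terms F 1).

Definition rr1_edge F u w : nat * C :=
  if u \in val_terms F 0 then (rr1_target F, 0)
  else if u \in val_terms F 1 then (rr1_target F, w) else (u, w).

Definition rr1 F := set_lab
  (map_edges (rr1_edge F) F
     [seq v <- nodes F | (v == rr1_target F) || (v \notin val_terms F 0 ++ val_terms F 1)])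
  (rr1_target F) (Term I 1).

Lemma RR1P F G : RR1 F G ->
  (val_terms F 0 != [::] \/ (1 < size (val_terms F 1%R))%N) /\ G = rr1 F.
Proof. by []. Qed.

Section RR1.
Variable F : tdd.
Hypotheses (wfF : wf F)
  (applicable : val_terms F 0 != [::] \/ (1 < size (val_terms F 1%R))%N).
Local Notation t := (rr1_target F).

Lemma rr1_target_in : t \in val_terms F 0 ++ val_terms F 1.
Proof.
move: applicable; rewrite mem_cat /rr1_target.
case: (val_terms F 1) => [|a s] /=; last by rewrite mem_head orbT.
by case: (val_terms F 0) => [[]//|b s _]; rewrite mem_head.
Qed.

Lemma rr1_target_term : t \in nodes F /\ exists c, lab F t = Term I c.
Proof.
by move: rr1_target_in; rewrite mem_cat => /orP[] /val_termsP[tN e]; split=> //; eexists; exact: e.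
Qed.

Lemma rr1_redirection :
  redirection F (rr1 F) (rr1_edge F) (fun v c => if v == t then 1 else c).
Proof.
have [tN [ct et]] := rr1_target_term.
have t_term : is_term (lab F) t by rewrite /is_term et.
have target u w : u \in nodes F -> (rr1_edge F u w).1 \in nodes (rr1 F).
  move=> uN; rewrite /rr1_edge mem_filter.
  case: ifP => [_|u0]; first by rewrite eqxx tN.
  case: ifP => [_|u1]; first by rewrite eqxx tN.
  by rewrite /= mem_cat u0 u1 uN orbT.
have [_ [rk /ranking_term_rank rkF]] := wf_dag wfF.
split=> //=.
- exact: filter_subseq.
- move=> v; rewrite /relabel; case: (eqVneq v t) => [->|_]; first by rewrite et.
  by case: (lab F v).
- exact/target/wf_root.
- move=> v x lo w0 hi w1; rewrite mem_filter => /andP[_ vN] e.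
  by have [loN hiN] := wf_closed wfF vN e; split; apply: target.
- exists (term_rank (lab F) rk) => // u w.
  by rewrite /rr1_edge; case: ifP => _; [|case: ifP => _]; rewrite /= /term_rank ?t_term.
- move=> x u w; rewrite /rr1_edge.
  by case: ifP => _; [|case: ifP => _] => //=; rewrite /index_gt et.
- move=> u w a uN; rewrite /rr1_edge.
  case: ifP => [/val_termsP[_ e]|u0] /=.
    by rewrite (node_tensor_term wfF uN e) !mul0r mulr0.
  case: ifP => [/val_termsP[_ e]|u1] /=.
    by rewrite (node_tensor_term wfF uN e) /relabel_tensor et eqxx.
  rewrite relabel_tensorE // => c _; case: eqP => // ut.
  by move: rr1_target_in; rewrite -ut mem_cat u0 u1.
- by move=> v c; case: eqP; [right|left].
Qed.

Lemma rr1_no_zero_terms : val_terms (rr1 F) 0 = [::].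
Proof.
case E: (val_terms (rr1 F) 0) => [//|z s].
have zT0 : z \in val_terms (rr1 F) 0 by rewrite E mem_head.
have /val_termsP[zG] := zT0; rewrite /= mem_filter in zG.
case: (eqVneq z t) zG => [->|_] /= zG; first by rewrite eqxx => -[] /eqP; rewrite oner_eq0.
by move: zG; rewrite mem_cat (redirection_zero_terms rr1_redirection zT0).
Qed.

Lemma rr1_same_size : size (nodes (rr1 F)) = size (nodes F) -> val_terms F 0 != [::].
Proof.
rewrite size_filter => /eqP; rewrite -all_count => /allP kept.
have one_t v : v \in val_terms F 1 -> v = t.
  move=> vT1; have [vN _] := val_termsP _ _ _ vT1.
  by move: (kept v vN); rewrite /= mem_cat vT1 orbT orbF => /eqP.
case: applicable => // T1_big; apply/negP => /eqP T0_nil.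
have : uniq (val_terms F 1) by apply/filter_uniq/filter_uniq; case: wfF.
move: T1_big one_t; case: (val_terms F 1) => [|a [|b s]] //= _ one_t /andP[ab _].
have ea : a = t by apply: one_t; rewrite mem_head.
have eb : b = t by apply: one_t; rewrite !inE eqxx orbT.
by move: ab; rewrite ea eb inE eqxx.
Qed.

Lemma rr1_measure : (measure (rr1 F) < measure F)%N.
Proof.
have := redirection_size rr1_redirection; rewrite leq_eqVlt => /orP[/eqP same|]; last first.
  exact: measure_lt_size.
rewrite /measure same ltn_add2l /potential rr1_no_zero_terms (rr1_same_size same) /=.
by case: `[< _ >]; case: `[< _ >].
Qed.

End RR1.

Definition rr2_edge (t u : nat) (w : C) : nat * C := if w == 0 then (t, 0) else (u, w).

Lemma RR2P F G : RR2 F G -> exists t, [/\ terms F = [:: t],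
  (exists u, edge F u 0 /\ u <> t) \/ (exists v, v \in nodes F /\ ~~ reachable F v) &
  G = prune (map_edges (rr2_edge t) F (nodes F))].
Proof. by []. Qed.

Section RR2.
Variables (F : tdd) (t : nat).
Hypotheses (wfF : wf F) (terms_t : terms F = [:: t]).
Hypothesis applicable :
  (exists u, edge F u 0 /\ u <> t) \/ (exists v, v \in nodes F /\ ~~ reachable F v).
Local Notation G' := (map_edges (rr2_edge t) F (nodes F)).

Lemma rr2_t_in : t \in nodes F.
Proof. by have := mem_head t [::]; rewrite -terms_t mem_filter => /andP[]. Qed.

Lemma rr2_term v : v \in nodes F -> is_term (lab F) v = (v == t).
Proof.
move=> vN; apply/idP/eqP => [v_term|->].
  by apply/eqP; rewrite -mem_seq1 -terms_t mem_filter v_term.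
by have := mem_head t [::]; rewrite -terms_t mem_filter => /andP[].
Qed.

Lemma rr2_redirection : redirection F G' (rr2_edge t) (fun _ c => c).
Proof.
have t_term := rr2_term rr2_t_in; rewrite eqxx in t_term.
have target u w : u \in nodes F -> (rr2_edge t u w).1 \in nodes F.
  by rewrite /rr2_edge; case: eqP => // _ _; apply: rr2_t_in.
have [_ [rk /ranking_term_rank rkF]] := wf_dag wfF.
split=> //=.
- exact/target/wf_root.
- move=> v x lo w0 hi w1 vN e.
  by have [loN hiN] := wf_closed wfF vN e; split; apply: target.
- exists (term_rank (lab F) rk) => // u w.
  by rewrite /rr2_edge; case: eqP => _ //=; rewrite /term_rank t_term.
- move=> x u w; rewrite /rr2_edge; case: eqP => _ //= _.
  by move: t_term; rewrite /is_term /index_gt; case: (lab F t).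
- move=> u w a uN; rewrite /rr2_edge; case: eqP => [->|_] /=; first by rewrite !mul0r.
  by rewrite relabel_tensorE.
- by left.
Qed.

Lemma rr2_no_zero_inner_edge : ~ zero_inner_edge (prune G').
Proof.
have rd := redirection_prune wfF rr2_redirection.
case=> u [e_u u_inner]; have [c [w' [_]]] := redirection_edge rd e_u.
rewrite /rr2_edge; case: eqP => [_ [ut]|w'0 [_ /w'0 //]].
by move: u_inner; rewrite (redirection_labE rd) is_term_relabel -ut rr2_term ?eqxx ?rr2_t_in.
Qed.

Lemma rr2_same_size : size (nodes (prune G')) = size (nodes F) -> zero_inner_edge F.
Proof.
move=> same; apply: contrapT => no_edge.
have zero_t u : edge F u 0 -> u = t.
  move=> e; have uN := edge_in wfF e; apply/eqP; rewrite -rr2_term //.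
  by apply: contraT => u_inner; case: no_edge; exists u.
have edge_id u w : edge F u w -> rr2_edge t u w = (u, w).
  by rewrite /rr2_edge; case: eqP => // -> /zero_t ->.
have labE : {in nodes F, lab F =1 lab G'}.
  move=> v vN /=; case e: (lab F v) => [//|x lo w0 hi w1].
  by have [? ?] := edge_succ vN e; rewrite !edge_id.
have reach v : reachable G' v = reachable F v.
  rewrite /reachable /= edge_id; last by left.
  by rewrite -(reach_from_eq (wf_closed wfF) labE) ?wf_root.
move: same; rewrite size_filter => /eqP; rewrite -all_count => /allP all_reach.
case: applicable => [[u [/zero_t ut []//]]|[v [vN]]].
by rewrite -reach all_reach.
Qed.

Lemma rr2_measure : (measure (prune G') < measure F)%N.
Proof.
have rd := redirection_prune wfF rr2_redirection.
have := redirection_size rd; rewrite leq_eqVlt => /orP[/eqP same|]; last first.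
  exact: measure_lt_size.
rewrite /measure same ltn_add2l /potential (asboolF rr2_no_zero_inner_edge).
rewrite (asboolT (rr2_same_size same)) addn0 addn1 ltnS.
case E: (val_terms (prune G') 0) => [//|z s].
have := redirection_zero_terms rd; rewrite E => /(_ z (mem_head _ _)).
by case: (val_terms F 0).
Qed.

End RR2.

(** * Invariance and termination *)

Definition tdd_inv F := [/\ wf F, ordered F & normal_tdd F].

Lemma step_redirection F G : wf F -> ordered F -> step F G -> exists f h, redirection F G f h.
Proof.
move=> wfF ordF.
case=> [/RR1P[app ->]|/RR2P[t [terms_t _ ->]]|/(RR3_merge wfF ordF)|/(RR4_merge wfF)].
- by eexists; eexists; apply: rr1_redirection.
- by eexists; eexists; apply/redirection_prune/rr2_redirection.
- by case=> [v [s [k [mg ->]]]]; eexists; eexists; apply: merge_redirection mg.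
- by case=> [v [s [k [mg ->]]]]; eexists; eexists; apply: merge_redirection mg.
Qed.

Lemma step_inv F G : tdd_inv F -> step F G -> tdd_inv G /\ tensor_of G = tensor_of F.
Proof.
case=> wfF ordF nF /(step_redirection wfF ordF) [f [h rd]].
split; last exact: redirection_tensor_of wfF rd.
split; [exact: redirection_wf wfF rd | exact: redirection_ordered rd ordF |].
exact: redirection_normal wfF rd nF.
Qed.

Lemma steps_inv F G : tdd_inv F -> steps F G -> tdd_inv G /\ tensor_of G = tensor_of F.
Proof.
move=> + FG; elim: FG => [//|F1 F2 F3 st _ IH] inv1.
by have [inv2 <-] := step_inv inv1 st; apply: IH.
Qed.

Lemma step_measure F G : wf F -> ordered F -> step F G -> (measure G < measure F)%N.
Proof.
move=> wfF ordF.
case=> [/RR1P[app ->]|/RR2P[t [terms_t app ->]]|/(RR3_merge wfF ordF)|/(RR4_merge wfF)].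
- exact: rr1_measure.
- exact: rr2_measure.
- by case=> [v [s [k [[vN _ _ _ _] ->]]]]; apply/measure_lt_size/merge_size.
- by case=> [v [s [k [[vN _ _ _ _] ->]]]]; apply/measure_lt_size/merge_size.
Qed.

Lemma steps_to_irreducible F : tdd_inv F -> exists G, steps F G /\ irreducible G.
Proof.
move=> invF; have [n] := ubnP (measure F); elim: n F invF => // n IH F invF /ltnSE F_n.
have [[G FG]|irrF] := pselect (exists G, step F G); last by exists F; split=> //; constructor.
have [wfF ordF _] := invF.
have [H [GH irrH]] := IH G (step_inv invF FG).1 (leq_trans (step_measure wfF ordF FG) F_n).
by exists H; split=> //; apply: steps_cons FG GH.
Qed.

(** * Irreducible TDDs are reduced *)

Section Irreducible.
Variable G : tdd.
Hypotheses (wfG : wf G) (ordG : ordered G) (nG : normal_tdd G) (irrG : irreducible G).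

Lemma irreducible_terms : exists t, terms G = [:: t] /\ lab G t = Term I 1.
Proof.
have noRR1 : ~ (val_terms G 0 != [::] \/ (1 < size (val_terms G 1%R))%N).
  by move=> app; apply: irrG; exists (rr1 G); apply: Or41; exact: (conj app erefl).
have all_one : val_terms G 1 = terms G.
  apply/all_filterP/allP => v; rewrite mem_filter => /andP[+ vN].
  rewrite /is_term /term_val; case e: (lab G v) => [c|//] _.
  have := nG vN; rewrite (node_tensor_term wfG vN e) => /normal_tensor_const[c0|->//].
  have vT0 : v \in val_terms G 0 by apply/val_termsP; rewrite -c0.
  by case: noRR1; left; apply: contraTneq vT0 => ->.
have [t tT] := exists_term wfG; rewrite -all_one in tT.
have [_ t1] := val_termsP _ _ _ tT.
exists t; split=> //; rewrite -all_one.
have : (size (val_terms G 1%R) <= 1)%N by rewrite leqNgt; apply/negP => big; apply: noRR1; right.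
by move: tT; case: (val_terms G 1) => [|t' [|]] //; rewrite inE => /eqP ->.
Qed.

Variable t : nat.
Hypotheses (terms_t : terms G = [:: t]) (t1 : lab G t = Term I 1).

Lemma irr_term_eq v c : v \in nodes G -> lab G v = Term I c -> v = t.
Proof.
by move=> vN e; apply/eqP; rewrite -mem_seq1 -terms_t mem_filter /is_term e vN.
Qed.

Lemma irr_zero_edge u : edge G u 0 -> u = t.
Proof.
move=> e; apply: contrapT => ut; apply: irrG.
by eexists; apply: Or42; exists t; split=> //; left; exists u.
Qed.

Lemma irr_not_RR3_one v x s : v \in nodes G -> lab G v <> Inner x s 1 s 1.
Proof.
move=> vN e; apply: irrG.
by eexists; apply: Or43; exists v, x, s, 1; split=> //; left.
Qed.

Lemma irr_not_RR3_zero v x : v \in nodes G -> lab G v <> Inner x t 0 t 0.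
Proof.
move=> vN e; apply: irrG.
by eexists; apply: Or43; exists v, x, t, 0; split=> //; right; split=> //; exists t.
Qed.

Lemma irr_RR4 u v x lo w0 hi w1 : u \in nodes G -> v \in nodes G ->
  lab G u = Inner x lo w0 hi w1 -> lab G v = Inner x lo w0 hi w1 -> u = v.
Proof.
move=> uN vN eu ev; case: (eqVneq u v) => // uv; case: irrG.
by eexists; apply: Or44; exists u, v; split=> //; exists x, lo, w0, hi, w1.
Qed.

Lemma irr_node_tensor_neq0 : {in nodes G, forall v, exists b, node_tensor G v b != 0}.
Proof.
apply: (dag_ind (wf_dag wfG)) => v vN IH.
case e: (lab G v) => [c|x lo w0 hi w1].
  have vt := irr_term_eq vN e; subst v.
  by exists zero_assignment; rewrite (node_tensor_term wfG vN t1) oner_neq0.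
have [[b0 lo_b0] [b1 hi_b1]] := IH _ _ _ _ _ e.
have [//|v_zero] := pselect (exists b, node_tensor G v b != 0).
have v0 b : node_tensor G v b = 0.
  by apply/eqP; apply: contraT => nz; exfalso; apply: v_zero; exists b.
have [lo_e hi_e] := edge_succ vN e.
have [+ _] := node_tensor_upd wfG ordG b0 vN e; have [_ +] := node_tensor_upd wfG ordG b1 vN e.
rewrite !v0 => /esym/eqP; rewrite mulf_eq0 (negbTE hi_b1) orbF => /eqP w10.
move=> /esym/eqP; rewrite mulf_eq0 (negbTE lo_b0) orbF => /eqP w00.
subst w0 w1; rewrite (irr_zero_edge lo_e) (irr_zero_edge hi_e) in e.
by case: (irr_not_RR3_zero vN e).
Qed.

Lemma irr_edge_inj u w u' w' : edge G u w -> edge G u' w' ->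
  (forall b, w * node_tensor G u b = w' * node_tensor G u' b) ->
  (node_tensor G u = node_tensor G u' -> u = u') -> u = u' /\ w = w'.
Proof.
move=> e e' E IH; have uN := edge_in wfG e; have u'N := edge_in wfG e'.
case: (eqVneq w 0) => [w0|w_nz].
  subst w; have [b nz] := irr_node_tensor_neq0 u'N.
  move/eqP: (E b); rewrite mul0r eq_sym mulf_eq0 (negbTE nz) orbF => /eqP w'0; subst w'.
  by rewrite (irr_zero_edge e) (irr_zero_edge e').
have [ww' uu'] :=
  normal_tensor_scale_inj (nG uN) (nG u'N) (irr_node_tensor_neq0 uN) w_nz E.
by split=> //; apply/IH/funext.
Qed.

(* Otherwise RR3 would apply to [v]. *)
Lemma irr_node_tensor_dep v x lo w0 hi w1 : v \in nodes G -> lab G v = Inner x lo w0 hi w1 ->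
  indep (node_tensor G v) x -> (node_tensor G lo = node_tensor G hi -> lo = hi) -> False.
Proof.
move=> vN e ind IH; have [lo_e hi_e] := edge_succ vN e.
have E b : w0 * node_tensor G lo b = w1 * node_tensor G hi b.
  have [<- <-] := node_tensor_upd wfG ordG b vN e.
  by apply: ind => j jx; rewrite !upd_other.
have [lohi w01] := irr_edge_inj lo_e hi_e E IH; subst hi w1.
case: (eqVneq w0 0) => [w00|w0_nz].
  by subst w0; rewrite (irr_zero_edge lo_e) in e; apply: irr_not_RR3_zero vN e.
have [loN _] := wf_closed wfG vN e.
have Ev b : w0 * node_tensor G lo b = 1 * node_tensor G v b.
  by rewrite mul1r (node_tensorE wfG vN) /node_rhs e /xbar /xvar; ring.
have [w01 _] := normal_tensor_scale_inj (nG loN) (nG vN) (irr_node_tensor_neq0 loN) w0_nz Ev.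
by subst w0; apply: irr_not_RR3_one vN e.
Qed.

Lemma irr_index_gt_tensor_neq u v y lo w0 hi w1 : u \in nodes G -> v \in nodes G ->
  lab G v = Inner y lo w0 hi w1 -> index_gt (lab G) y u ->
  (node_tensor G lo = node_tensor G hi -> lo = hi) -> node_tensor G u <> node_tensor G v.
Proof.
move=> uN vN ev u_gt IH E; apply: irr_node_tensor_dep vN ev _ IH.
by rewrite -E; apply: node_tensor_indep.
Qed.

Lemma irr_succ_eq u v x lo w0 hi w1 lo' w0' hi' w1' : u \in nodes G -> v \in nodes G ->
  lab G u = Inner x lo w0 hi w1 -> lab G v = Inner x lo' w0' hi' w1' ->
  node_tensor G u = node_tensor G v ->
  (node_tensor G lo = node_tensor G lo' -> lo = lo') ->
  (node_tensor G hi = node_tensor G hi' -> hi = hi') -> u = v.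
Proof.
move=> uN vN eu ev E IHlo IHhi.
have [lo_e hi_e] := edge_succ uN eu; have [lo'_e hi'_e] := edge_succ vN ev.
have upd_u b := node_tensor_upd wfG ordG b uN eu.
have upd_v b := node_tensor_upd wfG ordG b vN ev.
have E0 b : w0 * node_tensor G lo b = w0' * node_tensor G lo' b.
  by rewrite -(upd_u b).1 -(upd_v b).1 E.
have E1 b : w1 * node_tensor G hi b = w1' * node_tensor G hi' b.
  by rewrite -(upd_u b).2 -(upd_v b).2 E.
have [elo ew0] := irr_edge_inj lo_e lo'_e E0 IHlo.
have [ehi ew1] := irr_edge_inj hi_e hi'_e E1 IHhi.
by subst lo' w0' hi' w1'; apply: irr_RR4 uN vN eu ev.
Qed.

Lemma irr_node_tensor_inj : {in nodes G &, injective (node_tensor G)}.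
Proof.
have [_ [rk rkG]] := wf_dag wfG.
move=> u v; have [n] := ubnP (maxn (rk u) (rk v)).
elim: n u v => // n IH u v /ltnSE uv_n uN vN E.
pose below c := c \in nodes G /\ (rk c < maxn (rk u) (rk v))%N.
have succ_below z x lo w0 hi w1 : z \in nodes G -> lab G z = Inner x lo w0 hi w1 ->
    z = u \/ z = v -> below lo /\ below hi.
  move=> zN e zuv; have [loN hiN] := wf_closed wfG zN e; have := rkG _ _ _ _ _ _ zN e.
  by case: zuv => -> ranks; split; split=> //; lia.
have rec c c' : below c -> below c' -> node_tensor G c = node_tensor G c' -> c = c'.
  by move=> [cN c_lt] [c'N c'_lt]; apply: IH => //; lia.
have rec_succ z x lo w0 hi w1 : z \in nodes G -> lab G z = Inner x lo w0 hi w1 ->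
    z = u \/ z = v -> node_tensor G lo = node_tensor G hi -> lo = hi.
  by move=> zN e zuv; have [] := succ_below _ _ _ _ _ _ zN e zuv; apply: rec.
have rec_u := rec_succ _ _ _ _ _ _ uN _ (or_introl erefl).
have rec_v := rec_succ _ _ _ _ _ _ vN _ (or_intror erefl).
case eu: (lab G u) => [cu|x lo w0 hi w1]; case ev: (lab G v) => [cv|y lo' w0' hi' w1'].
- by rewrite (irr_term_eq uN eu) (irr_term_eq vN ev).
- have u_gt : index_gt (lab G) y u by rewrite /index_gt eu.
  by case: (irr_index_gt_tensor_neq uN vN ev u_gt (rec_v _ _ _ _ _ ev) E).
- have v_gt : index_gt (lab G) x v by rewrite /index_gt ev.
  by case: (irr_index_gt_tensor_neq vN uN eu v_gt (rec_u _ _ _ _ _ eu) (esym E)).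
case: (ltgtP x y) => [xy|yx|exy].
- have v_gt : index_gt (lab G) x v by rewrite /index_gt ev.
  by case: (irr_index_gt_tensor_neq vN uN eu v_gt (rec_u _ _ _ _ _ eu) (esym E)).
- have u_gt : index_gt (lab G) y u by rewrite /index_gt eu.
  by case: (irr_index_gt_tensor_neq uN vN ev u_gt (rec_v _ _ _ _ _ ev) E).
subst y; have [lo_u hi_u] := succ_below _ _ _ _ _ _ uN eu (or_introl erefl).
have [lo_v hi_v] := succ_below _ _ _ _ _ _ vN ev (or_intror erefl).
by apply: irr_succ_eq uN vN eu ev E _ _; apply: rec.
Qed.

Lemma irreducible_reduced_at : reduced G.
Proof.
split=> //.
- by move=> v vN v0; have [b] := irr_node_tensor_neq0 vN; rewrite v0 eqxx.
- by exists t; split=> // u w e w0; apply: irr_zero_edge; rewrite -w0.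
- by move=> u v uN vN uv E; apply/uv/irr_node_tensor_inj.
Qed.

End Irreducible.

Lemma irreducible_reduced G : tdd_inv G -> irreducible G -> reduced G.
Proof.
case=> wfG ordG nG irrG; have [t [terms_t t1]] := irreducible_terms wfG nG irrG.
exact: (irreducible_reduced_at wfG ordG nG irrG terms_t t1).
Qed.

End TDDReduction.

Theorem theorem5 (R : realType) (disp : Order.disp_t) (I : finOrderType disp)
    (F : tdd R I) :
  wf F -> ordered F -> normal_tdd F ->
  (* applying a reduction rule does not change the represented tensor *)
  (forall G, step F G -> tensor_of G = tensor_of F) /\
  (* the reduction rules can be applied until none is applicable ... *)
  (exists G, steps F G /\ irreducible G) /\
  (* ... and doing so (in any order) yields the reduced TDD of phi *)
  (forall G, steps F G -> irreducible G ->
     [/\ wf G, ordered G, reduced G & tensor_of G = tensor_of F]).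
Proof.
move=> wfF ordF nF; have invF : tdd_inv F by [].
split; first by move=> G /(step_inv invF)[].
split; first exact: steps_to_irreducible.
move=> G /(steps_inv invF)[[wfG ordG nG] ->] irrG.
by split=> //; apply: irreducible_reduced.
Qed.
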